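(* The kernel invariance algebra $\mathfrak g^\cap=\bigcap_V\mathfrak g_V$ of the class of equations $i\psi_t+\psi_{xx}+V(t,x)\psi=0$, the intersection running over all smooth complex-valued potentials $V$, is the two-dimensional algebra $\langle M,I\rangle$.
   Context: For a smooth complex-valued potential $V(t,x)$, $\mathfrak g_V$ is the maximal Lie invariance algebra of the linear Schrödinger equation $i\psi_t+\psi_{xx}+V(t,x)\psi=0$ ($\psi$ complex-valued, $t,x$ real), whose elements are vector fields on the space of $(t,x,\psi,\psi^* )$ with $\psi^*$ treated as an additional dependent variable. $M=i\psi\partial_\psi-i\psi^*\partial_{\psi^*}$, $I=\psi\partial_\psi+\psi^*\partial_{\psi^*}$. *)

From Stdlib Require Import Reals List.
From Coquelicot Require Import Coquelicot.
Open Scope R_scope.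

(* Real coordinates: psi = u + i v (so psi^* = u - i v), V = V1 + i V2.
   A (real) vector field on the space (t,x,psi,psi^* ) is
     Q = tau d_t + xi d_x + eta d_psi + eta^* d_psi^*,
   written in real coordinates as  tau d_t + xi d_x + al d_u + be d_v
   with eta = al + i be. *)

Definition F4 := R -> R -> R -> R -> R.
Definition F2 := R -> R -> R.

Definition pd (i : nat) (f : F4) : F4 := fun a b c d =>
  match i with
  | 0 => Derive (fun s => f s b c d) a
  | 1 => Derive (fun s => f a s c d) b
  | 2 => Derive (fun s => f a b s d) c
  | _ => Derive (fun s => f a b c s) d
  end.

Definition ex_pd (i : nat) (f : F4) (a b c d : R) : Prop :=
  match i with
  | 0 => ex_derive (fun s => f s b c d) a
  | 1 => ex_derive (fun s => f a s c d) b
  | 2 => ex_derive (fun s => f a b s d) c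
  | _ => ex_derive (fun s => f a b c s) d
  end.

Fixpoint pds (l : list nat) (f : F4) : F4 :=
  match l with
  | nil => f
  | i :: l' => pd i (pds l' f)
  end.

Definition uncurry4 (f : F4) (p : R * R * R * R) : R :=
  f (fst (fst (fst p))) (snd (fst (fst p))) (snd (fst p)) (snd p).

Definition Smooth4 (f : F4) : Prop :=
  forall l : list nat,
    (forall i a b c d, ex_pd i (pds l f) a b c d) /\
    (forall p, continuous (uncurry4 (pds l f)) p).

Definition Smooth2 (f : F2) : Prop := Smooth4 (fun t x _ _ => f t x).

Definition dt (f : F2) : F2 := fun t x => Derive (fun s => f s x) t.
Definition dx (f : F2) : F2 := fun t x => Derive (fun s => f t s) x.

Section Prolongation.
Variables (tau xi al be : F4) (u v : F2).

Definition along (g : F4) : F2 := fun t x => g t x (u t x) (v t x).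

(* characteristics W = eta - tau psi_t - xi psi_x, real and imaginary parts *)
Definition Wu : F2 := fun t x =>
  along al t x - along tau t x * dt u t x - along xi t x * dx u t x.
Definition Wv : F2 := fun t x =>
  along be t x - along tau t x * dt v t x - along xi t x * dx v t x.

(* prolongation coefficients phi^J = D_J W + tau w_{J t} + xi w_{J x},
   total derivatives computed along the section *)
Definition phi_t (W : F2) (w : F2) : F2 := fun t x =>
  dt W t x + along tau t x * dt (dt w) t x + along xi t x * dx (dt w) t x.
Definition phi_xx (W : F2) (w : F2) : F2 := fun t x =>
  dx (dx W) t x + along tau t x * dx (dx (dt w)) t x
                + along xi t x * dx (dx (dx w)) t x.
End Prolongation.

(* Real and imaginary parts of  i psi_t + psi_xx + V psi  along a section *)
Definition Delta1 (V1 V2 u v : F2) : F2 := fun t x =>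
  - dt v t x + dx (dx u) t x + V1 t x * u t x - V2 t x * v t x.
Definition Delta2 (V1 V2 u v : F2) : F2 := fun t x =>
  dt u t x + dx (dx v) t x + V1 t x * v t x + V2 t x * u t x.

(* pr^(2) Q applied to Delta1, Delta2, evaluated at the 2-jet of the section *)
Definition prDelta1 (V1 V2 : F2) (tau xi al be : F4) (u v : F2) : F2 :=
  fun t x =>
  - phi_t tau xi u v (Wv tau xi be u v) v t x
  + phi_xx tau xi u v (Wu tau xi al u v) u t x
  + (along u v tau t x * dt V1 t x + along u v xi t x * dx V1 t x) * u t x
  + V1 t x * along u v al t x
  - (along u v tau t x * dt V2 t x + along u v xi t x * dx V2 t x) * v t x
  - V2 t x * along u v be t x.

Definition prDelta2 (V1 V2 : F2) (tau xi al be : F4) (u v : F2) : F2 :=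
  fun t x =>
  phi_t tau xi u v (Wu tau xi al u v) u t x
  + phi_xx tau xi u v (Wv tau xi be u v) v t x
  + (along u v tau t x * dt V1 t x + along u v xi t x * dx V1 t x) * v t x
  + V1 t x * along u v be t x
  + (along u v tau t x * dt V2 t x + along u v xi t x * dx V2 t x) * u t x
  + V2 t x * along u v al t x.

(* Infinitesimal invariance criterion: pr^(2) Q (Delta) = 0 on the manifold
   Delta = 0 in the second-order jet space.  Every 2-jet is the 2-jet of a
   smooth (polynomial) section at a point, so quantifying over smooth
   sections and points is the same as quantifying over jet points. *)
Definition is_Lie_symmetry (V1 V2 : F2) (tau xi al be : F4) : Prop :=
  forall u v : F2, Smooth2 u -> Smooth2 v ->
  forall t x : R,
    Delta1 V1 V2 u v t x = 0 -> Delta2 V1 V2 u v t x = 0 ->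
    prDelta1 V1 V2 tau xi al be u v t x = 0 /\
    prDelta2 V1 V2 tau xi al be u v t x = 0.

Definition in_gV (V1 V2 : F2) (tau xi al be : F4) : Prop :=
  Smooth4 tau /\ Smooth4 xi /\ Smooth4 al /\ Smooth4 be /\
  is_Lie_symmetry V1 V2 tau xi al be.

Definition in_kernel (tau xi al be : F4) : Prop :=
  forall V1 V2 : F2, Smooth2 V1 -> Smooth2 V2 -> in_gV V1 V2 tau xi al be.

(* Q = c1 M + c2 I with M = i psi d_psi - i psi^* d_psi^*  (al = -v, be = u)
   and I = psi d_psi + psi^* d_psi^*  (al = u, be = v); real span. *)
Definition in_span_M_I (tau xi al be : F4) : Prop :=
  exists c1 c2 : R, forall t x u v : R,
    tau t x u v = 0 /\ xi t x u v = 0 /\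
    al t x u v = c1 * (- v) + c2 * u /\
    be t x u v = c1 * u + c2 * v.

(* M and I generate multiplication of psi by the constants i and 1; the equation being complex
   linear, they are symmetries for every potential.

   Conversely, let Q lie in every g_V.  Adding to V a potential that vanishes at a point where
   psi <> 0 changes the prolonged operator only by psi (tau V_t + xi V_x), so tau = xi = 0.  The
   invariance condition then says that eta(t, x, psi) solves the equation (at the point) whenever
   psi does.  Testing it on the sections psi0 + (t - t0) and psi0 + i (t - t0), which solve the
   equation at (t0, x0) for suitable constant potentials, gives eta_psi = eta / psi and
   eta_psi* = 0, so that eta / psi depends on (t, x) only: eta = H(t, x) psi.  Testing on psi = 1
   and psi = x with V = 0 shows that H solves the free equation and that H_x = 0; hence H is
   constant, and Q = Im H M + Re H I. *)

From Stdlib Require Import Reals Lra List.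
From Coquelicot Require Import Coquelicot Derive_2d.
Open Scope R_scope.

Lemma MVT_abs (f : R -> R) (a b : R) :
  (forall z, ex_derive f z) ->
  exists c, Rabs (c - a) <= Rabs (b - a) /\ f b - f a = Derive f c * (b - a).
Proof.
  intro Hf.
  destruct (MVT_gen f a b (Derive f)) as [c [Hc Hfc]].
  - intros z _. apply Derive_correct, Hf.
  - intros z _. apply continuity_pt_filterlim.
    apply (ex_derive_continuous (K := R_AbsRing) (V := R_NormedModule)), Hf.
  - exists c. split; [|exact Hfc].
    revert Hc. unfold Rmin, Rmax, Rabs.
    destruct (Rle_dec a b), (Rcase_abs (c - a)), (Rcase_abs (b - a)); lra.
Qed.

Lemma is_derive_0_eq (f : R -> R) (a b : R) :
  (forall z, is_derive f z 0) -> f a = f b.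
Proof.
  intro Hf.
  destruct (MVT_abs f b a) as [c [_ Hc]].
  - intro z. exists 0. apply Hf.
  - rewrite (is_derive_unique f c 0 (Hf c)) in Hc. lra.
Qed.

Lemma is_derive_of_Derive (f : R -> R) (x l : R) :
  ex_derive f x -> Derive f x = l -> is_derive f x l.
Proof. intros Hf <-. now apply Derive_correct. Qed.

Lemma continuous_eq_off_point (f g : R -> R) (x0 : R) :
  continuous f x0 -> continuous g x0 -> (forall s, s <> x0 -> f s = g s) ->
  f x0 = g x0.
Proof.
  intros Hf Hg Hfg.
  assert (Lf : is_lim f x0 (f x0))
    by exact (is_lim_comp_continuous (fun y => y) f x0 x0 (is_lim_id x0) Hf).
  assert (Lg : is_lim f x0 (g x0)).
  { apply (is_lim_ext_loc g).
    - exists (mkposreal 1 Rlt_0_1). intros y _ Hy. symmetry. now apply Hfg.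
    - exact (is_lim_comp_continuous (fun y => y) g x0 x0 (is_lim_id x0) Hg). }
  apply is_lim_unique in Lf. apply is_lim_unique in Lg.
  rewrite Lf in Lg. now injection Lg.
Qed.

Lemma derive_increment_bound (f : R -> R) (y : R) (eps : posreal) :
  ex_derive f y ->
  exists delta : posreal, forall v, Rabs (v - y) < delta ->
    Rabs (f v - f y - Derive f y * (v - y)) <= eps * Rabs (v - y).
Proof.
  intro Hf.
  apply Derive_correct, is_derive_Reals in Hf.
  destruct (Hf eps (cond_pos eps)) as [delta Hdelta].
  exists delta. intros v Hv.
  destruct (Req_dec v y) as [->|Hvy].
  - rewrite !Rminus_diag, Rmult_0_r, Rminus_diag, Rabs_R0, Rmult_0_r. lra.
  - specialize (Hdelta (v - y) ltac:(lra) Hv).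
    replace (y + (v - y)) with v in Hdelta by ring.
    replace (f v - f y - Derive f y * (v - y))
      with (((f v - f y) / (v - y) - Derive f y) * (v - y)) by (field; lra).
    rewrite Rabs_mult. apply Rmult_le_compat_r; [apply Rabs_pos | lra].
Qed.

Lemma differentiable_pt_lim_of_partials (f : R -> R -> R) (x y : R) :
  (forall u v, ex_derive (fun z => f z v) u) ->
  continuity_2d_pt (fun u v => Derive (fun z => f z v) u) x y ->
  ex_derive (fun z => f x z) y ->
  differentiable_pt_lim f x y (Derive (fun z => f z y) x) (Derive (fun z => f x z) y).
Proof.
  intros Hu Hc Hy eps.
  (* Split the increment at (x, v): mean value theorem in the first variable, differentiability
     in the second. *)
  set (e2 := pos_div_2 eps).
  destruct (Hc e2) as [d1 Hd1].
  destruct (derive_increment_bound _ y e2 Hy) as [d2 Hd2].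
  exists (mkposreal _ (Rmin_pos _ _ (cond_pos d1) (cond_pos d2))). simpl.
  intros u v Hux Hvy.
  destruct (MVT_abs (fun z => f z v) x u (fun z => Hu z v)) as [c [Hcx Hmvt]].
  pose proof (Rmin_l d1 d2). pose proof (Rmin_r d1 d2).
  assert (Hfx : Rabs (Derive (fun z => f z v) c - Derive (fun z => f z y) x) < e2)
    by (apply Hd1; lra).
  assert (Hfy : Rabs (f x v - f x y - Derive (fun z => f x z) y * (v - y)) <= e2 * Rabs (v - y))
    by (apply Hd2; lra).
  replace (f u v - f x y - (Derive (fun z => f z y) x * (u - x) + Derive (fun z => f x z) y * (v - y)))
    with ((Derive (fun z => f z v) c - Derive (fun z => f z y) x) * (u - x)
          + (f x v - f x y - Derive (fun z => f x z) y * (v - y))) by lra.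
  eapply Rle_trans; [apply Rabs_triang|]. rewrite Rabs_mult.
  assert (Hux' : Rabs (Derive (fun z => f z v) c - Derive (fun z => f z y) x) * Rabs (u - x)
                 <= e2 * Rabs (u - x)) by (apply Rmult_le_compat_r; [apply Rabs_pos | lra]).
  pose proof (Rmax_l (Rabs (u - x)) (Rabs (v - y))).
  pose proof (Rmax_r (Rabs (u - x)) (Rabs (v - y))).
  assert (Heps : pos eps = 2 * e2) by (unfold e2; simpl; field).
  pose proof (cond_pos e2). nra.
Qed.

Lemma is_derive_diagonal (f : R -> R -> R) (t0 c : R) :
  (forall a w, ex_derive (fun z => f z w) a) ->
  continuity_2d_pt (fun a w => Derive (fun z => f z w) a) t0 c ->
  ex_derive (fun w => f t0 w) c ->
  is_derive (fun s => f s (c + (s - t0))) t0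
    (Derive (fun z => f z c) t0 + Derive (fun w => f t0 w) c).
Proof.
  intros Ha Hc Hw.
  apply is_derive_Reals.
  replace (Derive (fun z => f z c) t0 + Derive (fun w => f t0 w) c)
    with (Derive (fun z => f z c) t0 * 1 + Derive (fun w => f t0 w) c * 1) by ring.
  apply (derivable_pt_lim_comp_2d f (fun s => s) (fun s => c + (s - t0))).
  - replace (c + (t0 - t0)) with c by ring.
    exact (differentiable_pt_lim_of_partials f t0 c Ha Hc Hw).
  - apply is_derive_Reals. auto_derive; auto.
  - apply is_derive_Reals. auto_derive; auto; ring.
Qed.

Lemma extend_zero_to_origin (h : R -> R -> R) :
  ex_derive (fun s => h s 0) 0 ->
  (forall u v, u * u + v * v <> 0 -> h u v = 0) ->
  forall u v, h u v = 0.
Proof.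
  intros Hder Hoff u v.
  destruct (Req_dec (u * u + v * v) 0) as [Huv|Huv]; [|now apply Hoff].
  replace u with 0 by nra. replace v with 0 by nra.
  apply (continuous_eq_off_point (fun s => h s 0) (fun _ => 0) 0).
  - apply (ex_derive_continuous (K := R_AbsRing) (V := R_NormedModule)), Hder.
  - apply continuous_const.
  - intros s Hs. apply Hoff. nra.
Qed.

Lemma punctured_plane_const (h : R -> R -> R) :
  (forall u v, u * u + v * v <> 0 -> is_derive (fun z => h z v) u 0) ->
  (forall u v, u * u + v * v <> 0 -> is_derive (fun z => h u z) v 0) ->
  forall u v, u * u + v * v <> 0 -> h u v = h 1 0.
Proof.
  intros Hu Hv.
  assert (Hhor : forall v a b, v <> 0 -> h a v = h b v)
    by (intros v a b H0; apply (is_derive_0_eq (fun z => h z v)); intro z; apply Hu; nra).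
  assert (Hver : forall u a b, u <> 0 -> h u a = h u b)
    by (intros u a b H0; apply (is_derive_0_eq (fun z => h u z)); intro z; apply Hv; nra).
  intros u v Huv.
  destruct (Req_dec v 0) as [->|Hv0].
  - rewrite (Hver u 0 1), (Hhor 1 u 1), (Hver 1 1 0); try lra. intros ->. apply Huv. ring.
  - rewrite (Hhor v u 1 Hv0). apply Hver. lra.
Qed.

Definition affine4 (k0 k1 k2 k3 k4 : R) : F4 :=
  fun a b c d => k0 + k1 * a + k2 * b + k3 * c + k4 * d.

Lemma continuous_affine4 (k0 k1 k2 k3 k4 : R) (p : R * R * R * R) :
  continuous (uncurry4 (affine4 k0 k1 k2 k3 k4)) p.
Proof.
  unfold uncurry4, affine4.
  assert (Ha : continuous (fun q : R * R * R * R => fst (fst (fst q))) p)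
    by (apply continuous_comp; [apply continuous_comp|]; apply continuous_fst).
  assert (Hb : continuous (fun q : R * R * R * R => snd (fst (fst q))) p)
    by (apply continuous_comp; [apply continuous_comp; apply continuous_fst|apply continuous_snd]).
  assert (Hc : continuous (fun q : R * R * R * R => snd (fst q)) p)
    by (apply continuous_comp; [apply continuous_fst|apply continuous_snd]).
  assert (Hd : continuous (fun q : R * R * R * R => snd q) p) by apply continuous_snd.
  assert (Hplus : forall f g : R * R * R * R -> R, continuous f p -> continuous g p ->
                   continuous (fun q => f q + g q) p)
    by (intros f g Hf Hg; exact (continuous_plus f g p Hf Hg)).
  assert (Hmult : forall f g : R * R * R * R -> R, continuous f p -> continuous g p ->
                   continuous (fun q => f q * g q) p)
    by (intros f g Hf Hg; exact (continuous_mult f g p Hf Hg)).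
  repeat match goal with
  | |- continuous (fun q => _ + _) p => apply Hplus
  | |- continuous (fun q => _ * _) p => apply Hmult
  | |- _ => first [assumption | apply continuous_const]
  end.
Qed.

Lemma pd_affine4 (f : F4) (k0 k1 k2 k3 k4 : R) (i : nat) :
  (forall a b c d, f a b c d = affine4 k0 k1 k2 k3 k4 a b c d) ->
  (forall a b c d, ex_pd i f a b c d) /\
  exists k, forall a b c d, pd i f a b c d = affine4 k 0 0 0 0 a b c d.
Proof.
  intro Hf. split.
  - intros a b c d. destruct i as [|[|[|i]]]; simpl;
      (eapply ex_derive_ext; [intro s; symmetry; apply Hf|]); unfold affine4; auto_derive; auto.
  - destruct i as [|[|[|i]]]; [exists k1 | exists k2 | exists k3 | exists k4];
      intros a b c d; simpl;
      erewrite Derive_ext by (intro s; apply Hf);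
      apply is_derive_unique; unfold affine4; auto_derive; auto; ring.
Qed.

Lemma Smooth4_affine4 (f : F4) (k0 k1 k2 k3 k4 : R) :
  (forall a b c d, f a b c d = affine4 k0 k1 k2 k3 k4 a b c d) -> Smooth4 f.
Proof.
  intros Hf l.
  assert (Hl : exists m0 m1 m2 m3 m4,
             forall a b c d, pds l f a b c d = affine4 m0 m1 m2 m3 m4 a b c d).
  { induction l as [|i l IH].
    - now exists k0, k1, k2, k3, k4.
    - destruct IH as (m0 & m1 & m2 & m3 & m4 & Hm).
      destruct (proj2 (pd_affine4 _ _ _ _ _ _ i Hm)) as [k Hk].
      now exists k, 0, 0, 0, 0. }
  destruct Hl as (m0 & m1 & m2 & m3 & m4 & Hm).
  split.
  - intro i. exact (proj1 (pd_affine4 _ _ _ _ _ _ i Hm)).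
  - intro p. apply (continuous_ext (uncurry4 (affine4 m0 m1 m2 m3 m4))).
    + intro q. symmetry. apply Hm.
    + apply continuous_affine4.
Qed.

Lemma Smooth2_affine (f : F2) (k0 k1 k2 : R) :
  (forall t x, f t x = k0 + k1 * t + k2 * x) -> Smooth2 f.
Proof.
  intro Hf. apply (Smooth4_affine4 _ k0 k1 k2 0 0).
  intros. unfold affine4. rewrite Hf. ring.
Qed.

Lemma Smooth2_const (k : R) : Smooth2 (fun _ _ => k).
Proof. apply (Smooth2_affine _ k 0 0). intros. ring. Qed.

Lemma continuity_2d_pt_slice_02 (h : F4) (a b c d : R) :
  continuous (uncurry4 h) (a, b, c, d) -> continuity_2d_pt (fun a' c' => h a' b c' d) a c.
Proof.
  intros H eps.
  destruct (proj1 (filterlim_locally _ _) H eps) as [delta Hdelta].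
  exists delta. intros a' c' Ha Hc.
  apply (Hdelta (a', b, c', d)). repeat split; try assumption; apply ball_center.
Qed.

Lemma continuity_2d_pt_slice_03 (h : F4) (a b c d : R) :
  continuous (uncurry4 h) (a, b, c, d) -> continuity_2d_pt (fun a' d' => h a' b c d') a d.
Proof.
  intros H eps.
  destruct (proj1 (filterlim_locally _ _) H eps) as [delta Hdelta].
  exists delta. intros a' d' Ha Hd.
  apply (Hdelta (a', b, c, d')). repeat split; try assumption; apply ball_center.
Qed.

Lemma Derive_shift_u (g : F4) (x c d t0 : R) : Smooth4 g ->
  Derive (fun s => g s x (c + (s - t0)) d) t0 = pd 0 g t0 x c d + pd 2 g t0 x c d.
Proof.
  intro Hg. apply is_derive_unique.
  apply (is_derive_diagonal (fun a w => g a x w d)).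
  - intros a w. exact (proj1 (Hg nil) 0%nat a x w d).
  - apply (continuity_2d_pt_slice_02 (pd 0 g)). exact (proj2 (Hg (0%nat :: nil)) _).
  - exact (proj1 (Hg nil) 2%nat t0 x c d).
Qed.

Lemma Derive_shift_v (g : F4) (x c d t0 : R) : Smooth4 g ->
  Derive (fun s => g s x c (d + (s - t0))) t0 = pd 0 g t0 x c d + pd 3 g t0 x c d.
Proof.
  intro Hg. apply is_derive_unique.
  apply (is_derive_diagonal (fun a w => g a x c w)).
  - intros a w. exact (proj1 (Hg nil) 0%nat a x c w).
  - apply (continuity_2d_pt_slice_03 (pd 0 g)). exact (proj2 (Hg (0%nat :: nil)) _).
  - exact (proj1 (Hg nil) 3%nat t0 x c d).
Qed.

Lemma dt_ext (f g : F2) : (forall t x, f t x = g t x) -> forall t x, dt f t x = dt g t x.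
Proof. intros H t x. apply Derive_ext. intro. apply H. Qed.

Lemma dx_ext (f g : F2) : (forall t x, f t x = g t x) -> forall t x, dx f t x = dx g t x.
Proof. intros H t x. apply Derive_ext. intro. apply H. Qed.

Lemma dt_const (k t x : R) : dt (fun _ _ => k) t x = 0.
Proof. apply (Derive_const k). Qed.

Lemma dx_const (k t x : R) : dx (fun _ _ => k) t x = 0.
Proof. apply (Derive_const k). Qed.

Lemma dxx_const (k t x : R) : dx (dx (fun _ _ => k)) t x = 0.
Proof. rewrite (dx_ext _ (fun _ _ => 0) (dx_const k)). apply dx_const. Qed.

Lemma dt_shift (c t0 t x : R) : dt (fun t _ => c + (t - t0)) t x = 1.
Proof. apply is_derive_unique. auto_derive; auto; ring. Qed.

Lemma dxx_of_t (f : R -> R) (t x : R) : dx (dx (fun t _ => f t)) t x = 0.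
Proof.
  rewrite (dx_ext _ (fun _ _ => 0)); [apply dx_const|].
  intros t' x'. apply (Derive_const (f t')).
Qed.

Lemma dt_lincomb (w u v : F2) (a b : R) :
  (forall t x, w t x = a * u t x + b * v t x) ->
  (forall t x, ex_derive (fun s => u s x) t) -> (forall t x, ex_derive (fun s => v s x) t) ->
  forall t x, dt w t x = a * dt u t x + b * dt v t x.
Proof.
  intros Hw Hu Hv t x. rewrite (dt_ext _ _ Hw).
  apply is_derive_unique. auto_derive; auto. unfold dt. ring.
Qed.

Lemma dx_lincomb (w u v : F2) (a b : R) :
  (forall t x, w t x = a * u t x + b * v t x) ->
  (forall t x, ex_derive (fun s => u t s) x) -> (forall t x, ex_derive (fun s => v t s) x) ->
  forall t x, dx w t x = a * dx u t x + b * dx v t x.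
Proof.
  intros Hw Hu Hv t x. rewrite (dx_ext _ _ Hw).
  apply is_derive_unique. auto_derive; auto. unfold dx. ring.
Qed.

Lemma Smooth2_ex_dt (u : F2) (t x : R) : Smooth2 u -> ex_derive (fun s => u s x) t.
Proof. intro Hu. exact (proj1 (Hu nil) 0%nat t x 0 0). Qed.

Lemma Smooth2_ex_dx (u : F2) (t x : R) : Smooth2 u -> ex_derive (fun s => u t s) x.
Proof. intro Hu. exact (proj1 (Hu nil) 1%nat t x 0 0). Qed.

Lemma Smooth2_ex_dxx (u : F2) (t x : R) : Smooth2 u -> ex_derive (fun s => dx u t s) x.
Proof. intro Hu. exact (proj1 (Hu (1%nat :: nil)) 1%nat t x 0 0). Qed.

Lemma Delta_ext (V1 V2 u v u' v' : F2) :
  (forall t x, u t x = u' t x) -> (forall t x, v t x = v' t x) -> forall t x,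
  Delta1 V1 V2 u v t x = Delta1 V1 V2 u' v' t x /\ Delta2 V1 V2 u v t x = Delta2 V1 V2 u' v' t x.
Proof.
  intros Hu Hv t x. unfold Delta1, Delta2.
  rewrite (dt_ext _ _ Hu), (dt_ext _ _ Hv), (dx_ext _ _ (dx_ext _ _ Hu)),
    (dx_ext _ _ (dx_ext _ _ Hv)), Hu, Hv.
  split; reflexivity.
Qed.

(* In complex form: Delta((a + i b) psi) = (a + i b) Delta(psi). *)
Lemma Delta_mul_complex (V1 V2 u v : F2) (a b : R) : Smooth2 u -> Smooth2 v -> forall t x,
  Delta1 V1 V2 (fun t x => a * u t x - b * v t x) (fun t x => b * u t x + a * v t x) t x
    = a * Delta1 V1 V2 u v t x - b * Delta2 V1 V2 u v t x /\
  Delta2 V1 V2 (fun t x => a * u t x - b * v t x) (fun t x => b * u t x + a * v t x) t x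
    = b * Delta1 V1 V2 u v t x + a * Delta2 V1 V2 u v t x.
Proof.
  intros Hu Hv t x.
  set (U := fun t x => a * u t x - b * v t x). set (W := fun t x => b * u t x + a * v t x).
  assert (HU : forall t x, U t x = a * u t x + (- b) * v t x) by (intros; unfold U; ring).
  assert (HW : forall t x, W t x = b * u t x + a * v t x) by reflexivity.
  assert (Xu : forall t x, ex_derive (fun s => u t s) x) by (intros; now apply Smooth2_ex_dx).
  assert (Xv : forall t x, ex_derive (fun s => v t s) x) by (intros; now apply Smooth2_ex_dx).
  assert (Xu' : forall t x, ex_derive (fun s => dx u t s) x) by (intros; now apply Smooth2_ex_dxx).
  assert (Xv' : forall t x, ex_derive (fun s => dx v t s) x) by (intros; now apply Smooth2_ex_dxx).
  unfold Delta1, Delta2.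
  rewrite (dt_lincomb _ _ _ _ _ HU), (dt_lincomb _ _ _ _ _ HW)
    by (intros; now apply Smooth2_ex_dt).
  rewrite (dx_lincomb _ _ _ _ _ (dx_lincomb _ _ _ _ _ HU Xu Xv) Xu' Xv').
  rewrite (dx_lincomb _ _ _ _ _ (dx_lincomb _ _ _ _ _ HW Xu Xv) Xu' Xv').
  unfold U, W. split; ring.
Qed.

Lemma Delta_mul_x (V1 V2 g1 g2 : F2) :
  (forall t x, ex_derive (fun s => g1 t s) x) -> (forall t x, ex_derive (fun s => dx g1 t s) x) ->
  (forall t x, ex_derive (fun s => g2 t s) x) -> (forall t x, ex_derive (fun s => dx g2 t s) x) ->
  forall t x,
  Delta1 V1 V2 (fun t x => g1 t x * x) (fun t x => g2 t x * x) t x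
    = Delta1 V1 V2 g1 g2 t x * x + 2 * dx g1 t x /\
  Delta2 V1 V2 (fun t x => g1 t x * x) (fun t x => g2 t x * x) t x
    = Delta2 V1 V2 g1 g2 t x * x + 2 * dx g2 t x.
Proof.
  assert (Hdt : forall (g : F2) t x, dt (fun t x => g t x * x) t x = dt g t x * x)
    by (intros; apply Derive_scal_l).
  assert (Hdx : forall (g : F2), (forall t x, ex_derive (fun s => g t s) x) ->
            forall t x, dx (fun t x => g t x * x) t x = dx g t x * x + g t x)
    by (intros g Hg t x; apply is_derive_unique; auto_derive; auto; unfold dx; ring).
  assert (Hdxx : forall (g : F2), (forall t x, ex_derive (fun s => g t s) x) ->
            (forall t x, ex_derive (fun s => dx g t s) x) ->
            forall t x, dx (dx (fun t x => g t x * x)) t x = dx (dx g) t x * x + 2 * dx g t x).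
  { intros g Hg Hg' t x. rewrite (dx_ext _ _ (Hdx g Hg)).
    apply is_derive_unique. auto_derive; auto. unfold dx. ring. }
  intros H1 H1' H2 H2' t x. unfold Delta1, Delta2.
  rewrite !Hdt, !Hdxx by assumption. split; ring.
Qed.

Lemma Delta_const_section (V1 V2 : F2) (u0 v0 t x : R) :
  V1 t x = 0 -> V2 t x = 0 ->
  Delta1 V1 V2 (fun _ _ => u0) (fun _ _ => v0) t x = 0 /\
  Delta2 V1 V2 (fun _ _ => u0) (fun _ _ => v0) t x = 0.
Proof.
  intros E1 E2. unfold Delta1, Delta2. rewrite E1, E2, !dt_const, !dxx_const. split; ring.
Qed.

Lemma prDelta_vertical (V1 V2 : F2) (tau xi al be : F4) (u v : F2) :
  (forall a b c d, tau a b c d = 0) -> (forall a b c d, xi a b c d = 0) -> forall t x,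
  prDelta1 V1 V2 tau xi al be u v t x = Delta1 V1 V2 (along u v al) (along u v be) t x /\
  prDelta2 V1 V2 tau xi al be u v t x = Delta2 V1 V2 (along u v al) (along u v be) t x.
Proof.
  intros Htau Hxi t x.
  assert (HWu : forall t x, Wu tau xi al u v t x = along u v al t x)
    by (intros; unfold Wu, along; rewrite Htau, Hxi; ring).
  assert (HWv : forall t x, Wv tau xi be u v t x = along u v be t x)
    by (intros; unfold Wv, along; rewrite Htau, Hxi; ring).
  unfold prDelta1, prDelta2, Delta1, Delta2, phi_t, phi_xx.
  rewrite (dt_ext _ _ HWu), (dt_ext _ _ HWv), (dx_ext _ _ (dx_ext _ _ HWu)),
    (dx_ext _ _ (dx_ext _ _ HWv)).
  replace (along u v tau t x) with 0 by (symmetry; apply Htau).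
  replace (along u v xi t x) with 0 by (symmetry; apply Hxi).
  split; ring.
Qed.

Lemma prDelta_potential_shift (V1 V2 : F2) (tau xi al be : F4) (u v : F2) (t x : R) :
  prDelta1 V1 V2 tau xi al be u v t x
    = prDelta1 (fun _ _ => 0) (fun _ _ => 0) tau xi al be u v t x
      + (along u v tau t x * dt V1 t x + along u v xi t x * dx V1 t x) * u t x
      + V1 t x * along u v al t x
      - (along u v tau t x * dt V2 t x + along u v xi t x * dx V2 t x) * v t x
      - V2 t x * along u v be t x /\
  prDelta2 V1 V2 tau xi al be u v t x
    = prDelta2 (fun _ _ => 0) (fun _ _ => 0) tau xi al be u v t x
      + (along u v tau t x * dt V1 t x + along u v xi t x * dx V1 t x) * v t x
      + V1 t x * along u v be t x
      + (along u v tau t x * dt V2 t x + along u v xi t x * dx V2 t x) * u t x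
      + V2 t x * along u v al t x.
Proof. unfold prDelta1, prDelta2. rewrite dt_const, dx_const. split; ring. Qed.

Lemma in_kernel_of_span (tau xi al be : F4) :
  in_span_M_I tau xi al be -> in_kernel tau xi al be.
Proof.
  intros [c1 [c2 Hspan]] V1 V2 _ _.
  assert (Htau : forall a b c d, tau a b c d = 0) by (intros; apply Hspan).
  assert (Hxi : forall a b c d, xi a b c d = 0) by (intros; apply Hspan).
  assert (Hal : forall a b c d, al a b c d = c2 * c - c1 * d)
    by (intros; rewrite (proj1 (proj2 (proj2 (Hspan a b c d)))); ring).
  assert (Hbe : forall a b c d, be a b c d = c1 * c + c2 * d) by (intros; apply Hspan).
  split; [|split; [|split; [|split]]].
  - apply (Smooth4_affine4 _ 0 0 0 0 0). intros. rewrite Htau. unfold affine4. ring.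
  - apply (Smooth4_affine4 _ 0 0 0 0 0). intros. rewrite Hxi. unfold affine4. ring.
  - apply (Smooth4_affine4 _ 0 0 0 c2 (- c1)). intros. rewrite Hal. unfold affine4. ring.
  - apply (Smooth4_affine4 _ 0 0 0 c1 c2). intros. rewrite Hbe. unfold affine4. ring.
  - intros u v Hu Hv t x D1 D2.
    destruct (prDelta_vertical V1 V2 tau xi al be u v Htau Hxi t x) as [-> ->].
    destruct (Delta_ext V1 V2 (along u v al) (along u v be)
                (fun t x => c2 * u t x - c1 * v t x) (fun t x => c1 * u t x + c2 * v t x))
      with (t := t) (x := x) as [-> ->]; [intros; apply Hal | intros; apply Hbe |].
    destruct (Delta_mul_complex V1 V2 u v c2 c1 Hu Hv t x) as [-> ->].
    rewrite D1, D2. split; ring.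
Qed.

(* Real and imaginary parts of eta / psi, where eta = al + i be and psi = u + i v. *)
Definition eta_psi_re (al be : F4) : F4 :=
  fun t x u v => (u * al t x u v + v * be t x u v) / (u * u + v * v).
Definition eta_psi_im (al be : F4) : F4 :=
  fun t x u v => (u * be t x u v - v * al t x u v) / (u * u + v * v).

Section KernelAlgebra.
Variables (tau xi al be : F4).
Hypothesis Hker : in_kernel tau xi al be.

Lemma kernel_smooth : Smooth4 tau /\ Smooth4 xi /\ Smooth4 al /\ Smooth4 be.
Proof. now destruct (Hker _ _ (Smooth2_const 0) (Smooth2_const 0)) as (? & ? & ? & ? & _). Qed.

Lemma kernel_invariance (V1 V2 u v : F2) (t x : R) :
  Smooth2 V1 -> Smooth2 V2 -> Smooth2 u -> Smooth2 v ->
  Delta1 V1 V2 u v t x = 0 -> Delta2 V1 V2 u v t x = 0 ->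
  prDelta1 V1 V2 tau xi al be u v t x = 0 /\ prDelta2 V1 V2 tau xi al be u v t x = 0.
Proof.
  intros HV1 HV2 Hu Hv. destruct (Hker V1 V2 HV1 HV2) as (_ & _ & _ & _ & Hsym).
  exact (Hsym u v Hu Hv t x).
Qed.

(* Adding a potential V that vanishes at the point changes the prolonged operator only by
   psi (tau V_t + xi V_x). *)
Lemma kernel_transport_potential (V : F2) (t0 x0 u0 v0 : R) :
  Smooth2 V -> V t0 x0 = 0 -> u0 * u0 + v0 * v0 <> 0 ->
  tau t0 x0 u0 v0 * dt V t0 x0 + xi t0 x0 u0 v0 * dx V t0 x0 = 0.
Proof.
  intros HV HV0 Hpsi.
  set (u := fun _ _ : R => u0). set (v := fun _ _ : R => v0).
  destruct (Delta_const_section V (fun _ _ => 0) u0 v0 t0 x0 HV0 eq_refl) as [D1 D2].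
  destruct (kernel_invariance V (fun _ _ => 0) u v t0 x0 HV (Smooth2_const 0)
              (Smooth2_const u0) (Smooth2_const v0) D1 D2) as [P1 P2].
  destruct (Delta_const_section (fun _ _ => 0) (fun _ _ => 0) u0 v0 t0 x0 eq_refl eq_refl)
    as [D1' D2'].
  destruct (kernel_invariance _ _ u v t0 x0 (Smooth2_const 0) (Smooth2_const 0)
              (Smooth2_const u0) (Smooth2_const v0) D1' D2') as [P1' P2'].
  destruct (prDelta_potential_shift V (fun _ _ => 0) tau xi al be u v t0 x0) as [S1 S2].
  rewrite P1, P1', HV0, dt_const, dx_const in S1.
  rewrite P2, P2', HV0, dt_const, dx_const in S2.
  unfold along, u, v in S1, S2.
  set (T := tau t0 x0 u0 v0 * dt V t0 x0 + xi t0 x0 u0 v0 * dx V t0 x0) in *.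
  apply (Rmult_eq_reg_r (u0 * u0 + v0 * v0)); [|exact Hpsi].
  replace (T * (u0 * u0 + v0 * v0)) with ((T * u0) * u0 + (T * v0) * v0) by ring.
  replace (T * u0) with 0 by lra. replace (T * v0) with 0 by lra. ring.
Qed.

Lemma kernel_tau_xi_psi_nonzero (t0 x0 u0 v0 : R) :
  u0 * u0 + v0 * v0 <> 0 -> tau t0 x0 u0 v0 = 0 /\ xi t0 x0 u0 v0 = 0.
Proof.
  intro Hpsi. split.
  - assert (HV : Smooth2 (fun t _ => t - t0))
      by (apply (Smooth2_affine _ (- t0) 1 0); intros; ring).
    assert (H := kernel_transport_potential _ t0 x0 u0 v0 HV (Rminus_diag t0) Hpsi).
    unfold dx in H. rewrite Derive_const in H.
    replace (dt (fun t _ => t - t0) t0 x0) with 1 in H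
      by (symmetry; apply is_derive_unique; auto_derive; auto; ring).
    lra.
  - assert (HV : Smooth2 (fun _ x => x - x0))
      by (apply (Smooth2_affine _ (- x0) 0 1); intros; ring).
    assert (H := kernel_transport_potential _ t0 x0 u0 v0 HV (Rminus_diag x0) Hpsi).
    unfold dt in H. rewrite Derive_const in H.
    replace (dx (fun _ x => x - x0) t0 x0) with 1 in H
      by (symmetry; apply is_derive_unique; auto_derive; auto; ring).
    lra.
Qed.

Lemma kernel_tau_xi_zero :
  (forall a b c d, tau a b c d = 0) /\ (forall a b c d, xi a b c d = 0).
Proof.
  destruct kernel_smooth as (Stau & Sxi & _).
  split; intros a b; apply extend_zero_to_origin.
  - exact (proj1 (Stau nil) 2%nat a b 0 0).
  - intros u v Hpsi. now apply kernel_tau_xi_psi_nonzero.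
  - exact (proj1 (Sxi nil) 2%nat a b 0 0).
  - intros u v Hpsi. now apply kernel_tau_xi_psi_nonzero.
Qed.

Lemma kernel_vertical_invariance (V1 V2 u v : F2) (t x : R) :
  Smooth2 V1 -> Smooth2 V2 -> Smooth2 u -> Smooth2 v ->
  Delta1 V1 V2 u v t x = 0 -> Delta2 V1 V2 u v t x = 0 ->
  Delta1 V1 V2 (along u v al) (along u v be) t x = 0 /\
  Delta2 V1 V2 (along u v al) (along u v be) t x = 0.
Proof.
  intros HV1 HV2 Hu Hv D1 D2.
  destruct kernel_tau_xi_zero as [Htau Hxi].
  destruct (prDelta_vertical V1 V2 tau xi al be u v Htau Hxi t x) as [<- <-].
  now apply kernel_invariance.
Qed.

Lemma kernel_eta_free (u0 v0 t x : R) :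
  Delta1 (fun _ _ => 0) (fun _ _ => 0) (fun t x => al t x u0 v0) (fun t x => be t x u0 v0) t x = 0 /\
  Delta2 (fun _ _ => 0) (fun _ _ => 0) (fun t x => al t x u0 v0) (fun t x => be t x u0 v0) t x = 0.
Proof.
  destruct (Delta_const_section (fun _ _ => 0) (fun _ _ => 0) u0 v0 t x eq_refl eq_refl)
    as [D1 D2].
  exact (kernel_vertical_invariance _ _ (fun _ _ => u0) (fun _ _ => v0) t x
           (Smooth2_const 0) (Smooth2_const 0) (Smooth2_const u0) (Smooth2_const v0) D1 D2).
Qed.

(* The section psi = psi0 + (t - t0) solves the equation at (t0, x0) for the constant potential
   V = - i / psi0; comparing with the constant section psi = psi0 isolates the psi-derivative. *)
Lemma kernel_pd_u (t0 x0 u0 v0 : R) : u0 * u0 + v0 * v0 <> 0 ->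
  (u0 * u0 + v0 * v0) * pd 2 al t0 x0 u0 v0 = u0 * al t0 x0 u0 v0 + v0 * be t0 x0 u0 v0 /\
  (u0 * u0 + v0 * v0) * pd 2 be t0 x0 u0 v0 = u0 * be t0 x0 u0 v0 - v0 * al t0 x0 u0 v0.
Proof.
  intro Hpsi. set (r := u0 * u0 + v0 * v0) in *.
  destruct kernel_smooth as (_ & _ & Sal & Sbe).
  assert (Hu : Smooth2 (fun t _ => u0 + (t - t0)))
    by (apply (Smooth2_affine _ (u0 - t0) 1 0); intros; ring).
  assert (Hu0 : u0 + (t0 - t0) = u0) by ring.
  destruct (kernel_vertical_invariance (fun _ _ => - v0 / r) (fun _ _ => - u0 / r)
              (fun t _ => u0 + (t - t0)) (fun _ _ => v0)
              t0 x0 (Smooth2_const _) (Smooth2_const _) Hu (Smooth2_const v0)) as [E1 E2].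
  { unfold Delta1. rewrite dt_const, dxx_of_t, Hu0. unfold r. field. exact Hpsi. }
  { unfold Delta2. rewrite dt_shift, dxx_const, Hu0. unfold r. field. exact Hpsi. }
  destruct (kernel_eta_free u0 v0 t0 x0) as [F1 F2].
  unfold Delta1, Delta2, along, dt in E1, E2, F1, F2.
  rewrite (Derive_shift_u be x0 u0 v0 t0 Sbe) in E1.
  rewrite (Derive_shift_u al x0 u0 v0 t0 Sal) in E2.
  unfold dx in E1, E2, F1, F2. rewrite Hu0 in E1, E2.
  change (Derive (fun s => be s x0 u0 v0) t0) with (pd 0 be t0 x0 u0 v0) in F1.
  change (Derive (fun s => al s x0 u0 v0) t0) with (pd 0 al t0 x0 u0 v0) in F2.
  set (A := al t0 x0 u0 v0) in *. set (B := be t0 x0 u0 v0) in *.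
  split.
  - replace (pd 2 al t0 x0 u0 v0) with (u0 / r * A + v0 / r * B) by lra.
    field. exact Hpsi.
  - replace (pd 2 be t0 x0 u0 v0) with (u0 / r * B - v0 / r * A) by lra.
    field. exact Hpsi.
Qed.

Lemma kernel_pd_v (t0 x0 u0 v0 : R) : u0 * u0 + v0 * v0 <> 0 ->
  (u0 * u0 + v0 * v0) * pd 3 al t0 x0 u0 v0 = v0 * al t0 x0 u0 v0 - u0 * be t0 x0 u0 v0 /\
  (u0 * u0 + v0 * v0) * pd 3 be t0 x0 u0 v0 = u0 * al t0 x0 u0 v0 + v0 * be t0 x0 u0 v0.
Proof.
  intro Hpsi. set (r := u0 * u0 + v0 * v0) in *.
  destruct kernel_smooth as (_ & _ & Sal & Sbe).
  assert (Hv : Smooth2 (fun t _ => v0 + (t - t0)))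
    by (apply (Smooth2_affine _ (v0 - t0) 1 0); intros; ring).
  assert (Hv0 : v0 + (t0 - t0) = v0) by ring.
  destruct (kernel_vertical_invariance (fun _ _ => u0 / r) (fun _ _ => - v0 / r)
              (fun _ _ => u0) (fun t _ => v0 + (t - t0))
              t0 x0 (Smooth2_const _) (Smooth2_const _) (Smooth2_const u0) Hv) as [E1 E2].
  { unfold Delta1. rewrite dt_shift, dxx_const, Hv0. unfold r. field. exact Hpsi. }
  { unfold Delta2. rewrite dt_const, dxx_of_t, Hv0. unfold r. field. exact Hpsi. }
  destruct (kernel_eta_free u0 v0 t0 x0) as [F1 F2].
  unfold Delta1, Delta2, along, dt in E1, E2, F1, F2.
  rewrite (Derive_shift_v be x0 u0 v0 t0 Sbe) in E1.
  rewrite (Derive_shift_v al x0 u0 v0 t0 Sal) in E2.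
  unfold dx in E1, E2, F1, F2. rewrite Hv0 in E1, E2.
  change (Derive (fun s => be s x0 u0 v0) t0) with (pd 0 be t0 x0 u0 v0) in F1.
  change (Derive (fun s => al s x0 u0 v0) t0) with (pd 0 al t0 x0 u0 v0) in F2.
  set (A := al t0 x0 u0 v0) in *. set (B := be t0 x0 u0 v0) in *.
  split.
  - replace (pd 3 al t0 x0 u0 v0) with (v0 / r * A - u0 / r * B) by lra.
    field. exact Hpsi.
  - replace (pd 3 be t0 x0 u0 v0) with (u0 / r * A + v0 / r * B) by lra.
    field. exact Hpsi.
Qed.

Lemma kernel_eta_psi_du (t x u v : R) : u * u + v * v <> 0 ->
  is_derive (fun z => eta_psi_re al be t x z v) u 0 /\
  is_derive (fun z => eta_psi_im al be t x z v) u 0.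
Proof.
  intro Hpsi.
  destruct kernel_smooth as (_ & _ & Sal & Sbe).
  destruct (kernel_pd_u t x u v Hpsi) as [Eal Ebe].
  assert (Xal : ex_derive (fun z => al t x z v) u) by exact (proj1 (Sal nil) 2%nat t x u v).
  assert (Xbe : ex_derive (fun z => be t x z v) u) by exact (proj1 (Sbe nil) 2%nat t x u v).
  assert (Dal : Derive (fun z => al t x z v) u
                = (u * al t x u v + v * be t x u v) / (u * u + v * v))
    by (rewrite <- Eal; unfold pd; field; exact Hpsi).
  assert (Dbe : Derive (fun z => be t x z v) u
                = (u * be t x u v - v * al t x u v) / (u * u + v * v))
    by (rewrite <- Ebe; unfold pd; field; exact Hpsi).
  unfold eta_psi_re, eta_psi_im.
  split; auto_derive; try (repeat split; auto; fail); rewrite Dal, Dbe; field; exact Hpsi.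
Qed.

Lemma kernel_eta_psi_dv (t x u v : R) : u * u + v * v <> 0 ->
  is_derive (fun z => eta_psi_re al be t x u z) v 0 /\
  is_derive (fun z => eta_psi_im al be t x u z) v 0.
Proof.
  intro Hpsi.
  destruct kernel_smooth as (_ & _ & Sal & Sbe).
  destruct (kernel_pd_v t x u v Hpsi) as [Eal Ebe].
  assert (Xal : ex_derive (fun z => al t x u z) v) by exact (proj1 (Sal nil) 3%nat t x u v).
  assert (Xbe : ex_derive (fun z => be t x u z) v) by exact (proj1 (Sbe nil) 3%nat t x u v).
  assert (Dal : Derive (fun z => al t x u z) v
                = (v * al t x u v - u * be t x u v) / (u * u + v * v))
    by (rewrite <- Eal; unfold pd; field; exact Hpsi).
  assert (Dbe : Derive (fun z => be t x u z) v
                = (u * al t x u v + v * be t x u v) / (u * u + v * v))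
    by (rewrite <- Ebe; unfold pd; field; exact Hpsi).
  unfold eta_psi_re, eta_psi_im.
  split; auto_derive; try (repeat split; auto; fail); rewrite Dal, Dbe; field; exact Hpsi.
Qed.

Lemma kernel_eta_linear (t x u v : R) :
  al t x u v = al t x 1 0 * u - be t x 1 0 * v /\
  be t x u v = al t x 1 0 * v + be t x 1 0 * u.
Proof.
  destruct kernel_smooth as (_ & _ & Sal & Sbe).
  assert (Hoff : forall u v, u * u + v * v <> 0 ->
            al t x u v = al t x 1 0 * u - be t x 1 0 * v /\
            be t x u v = al t x 1 0 * v + be t x 1 0 * u).
  { intros u' v' Hpsi.
    assert (Hre := punctured_plane_const (eta_psi_re al be t x)
                     (fun u v H => proj1 (kernel_eta_psi_du t x u v H))
                     (fun u v H => proj1 (kernel_eta_psi_dv t x u v H)) u' v' Hpsi).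
    assert (Him := punctured_plane_const (eta_psi_im al be t x)
                     (fun u v H => proj2 (kernel_eta_psi_du t x u v H))
                     (fun u v H => proj2 (kernel_eta_psi_dv t x u v H)) u' v' Hpsi).
    replace (eta_psi_re al be t x 1 0) with (al t x 1 0) in Hre
      by (unfold eta_psi_re; field).
    replace (eta_psi_im al be t x 1 0) with (be t x 1 0) in Him
      by (unfold eta_psi_im; field).
    rewrite <- Hre, <- Him. unfold eta_psi_re, eta_psi_im. split; field; exact Hpsi. }
  split; apply Rminus_diag_uniq; revert u v.
  - apply (extend_zero_to_origin (fun u v => al t x u v - (al t x 1 0 * u - be t x 1 0 * v))).
    + auto_derive. exact (proj1 (Sal nil) 2%nat t x 0 0).
    + intros u v Hpsi. rewrite (proj1 (Hoff u v Hpsi)). ring.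
  - apply (extend_zero_to_origin (fun u v => be t x u v - (al t x 1 0 * v + be t x 1 0 * u))).
    + auto_derive. exact (proj1 (Sbe nil) 2%nat t x 0 0).
    + intros u v Hpsi. rewrite (proj2 (Hoff u v Hpsi)). ring.
Qed.

(* The section psi = x solves the free equation; since eta = H psi with H solving it too,
   the equation for eta reduces to 2 H_x = 0. *)
Lemma kernel_eta_dx_zero (t x : R) :
  dx (fun t x => al t x 1 0) t x = 0 /\ dx (fun t x => be t x 1 0) t x = 0.
Proof.
  destruct kernel_smooth as (_ & _ & Sal & Sbe).
  assert (Hid : Smooth2 (fun _ x => x)) by (apply (Smooth2_affine _ 0 0 1); intros; ring).
  assert (Dxx : dx (dx (fun _ x => x)) t x = 0).
  { rewrite (dx_ext _ (fun _ _ => 1)); [apply dx_const|].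
    intros. apply is_derive_unique. auto_derive; auto. }
  destruct (kernel_vertical_invariance (fun _ _ => 0) (fun _ _ => 0) (fun _ x => x) (fun _ _ => 0)
              t x (Smooth2_const 0) (Smooth2_const 0) Hid (Smooth2_const 0)) as [E1 E2].
  { unfold Delta1. rewrite dt_const, Dxx. ring. }
  { unfold Delta2, dt. rewrite Derive_const, dxx_const. ring. }
  destruct (Delta_ext (fun _ _ => 0) (fun _ _ => 0)
              (along (fun _ x => x) (fun _ _ => 0) al) (along (fun _ x => x) (fun _ _ => 0) be)
              (fun t x => al t x 1 0 * x) (fun t x => be t x 1 0 * x)) with (t := t) (x := x)
    as [R1 R2].
  { intros t' x'. unfold along. rewrite (proj1 (kernel_eta_linear t' x' x' 0)). ring. }
  { intros t' x'. unfold along. rewrite (proj2 (kernel_eta_linear t' x' x' 0)). ring. }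
  destruct (Delta_mul_x (fun _ _ => 0) (fun _ _ => 0)
              (fun t x => al t x 1 0) (fun t x => be t x 1 0)) with (t := t) (x := x) as [M1 M2].
  { intros t' x'. exact (proj1 (Sal nil) 1%nat t' x' 1 0). }
  { intros t' x'. exact (proj1 (Sal (1%nat :: nil)) 1%nat t' x' 1 0). }
  { intros t' x'. exact (proj1 (Sbe nil) 1%nat t' x' 1 0). }
  { intros t' x'. exact (proj1 (Sbe (1%nat :: nil)) 1%nat t' x' 1 0). }
  destruct (kernel_eta_free 1 0 t x) as [F1 F2].
  rewrite R1, M1, F1 in E1. rewrite R2, M2, F2 in E2.
  split; lra.
Qed.

Lemma kernel_eta_const (t x : R) : al t x 1 0 = al 0 0 1 0 /\ be t x 1 0 = be 0 0 1 0.
Proof.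
  destruct kernel_smooth as (_ & _ & Sal & Sbe).
  assert (Hdxx : forall t x, dx (dx (fun t x => al t x 1 0)) t x = 0 /\
                             dx (dx (fun t x => be t x 1 0)) t x = 0).
  { intros t' x'. split; rewrite (dx_ext _ (fun _ _ => 0)); try apply dx_const;
      intros; apply kernel_eta_dx_zero. }
  assert (Hdt : forall t x, dt (fun t x => al t x 1 0) t x = 0 /\
                            dt (fun t x => be t x 1 0) t x = 0).
  { intros t' x'. destruct (kernel_eta_free 1 0 t' x') as [F1 F2].
    destruct (Hdxx t' x') as [G1 G2]. unfold Delta1, Delta2 in F1, F2. split; lra. }
  assert (Hx : forall g : F4, Smooth4 g ->
            (forall t x, dx (fun t x => g t x 1 0) t x = 0) -> g t x 1 0 = g t 0 1 0).
  { intros g Sg Hg. apply (is_derive_0_eq (fun s => g t s 1 0)). intro s.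
    apply is_derive_of_Derive; [exact (proj1 (Sg nil) 1%nat t s 1 0) | apply Hg]. }
  assert (Ht : forall g : F4, Smooth4 g ->
            (forall t x, dt (fun t x => g t x 1 0) t x = 0) -> g t 0 1 0 = g 0 0 1 0).
  { intros g Sg Hg. apply (is_derive_0_eq (fun s => g s 0 1 0)). intro s.
    apply is_derive_of_Derive; [exact (proj1 (Sg nil) 0%nat s 0 1 0) | apply Hg]. }
  split; [rewrite (Hx al Sal), (Ht al Sal) | rewrite (Hx be Sbe), (Ht be Sbe)]; try reflexivity;
    intros; first [apply kernel_eta_dx_zero | apply Hdt].
Qed.

Lemma span_of_in_kernel : in_span_M_I tau xi al be.
Proof.
  exists (be 0 0 1 0), (al 0 0 1 0). intros t x u v.
  destruct kernel_tau_xi_zero as [Htau Hxi].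
  destruct (kernel_eta_linear t x u v) as [Hal Hbe].
  destruct (kernel_eta_const t x) as [Ha Hb].
  rewrite Htau, Hxi, Hal, Hbe, Ha, Hb. repeat split; ring.
Qed.
End KernelAlgebra.

Theorem proposition1 (tau xi al be : F4) :
  in_kernel tau xi al be <-> in_span_M_I tau xi al be.
Proof.
  split.
  - apply span_of_in_kernel.
  - apply in_kernel_of_span.
Qed.
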